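(* There exists a ${}^{2}\mathrm{cDCQS}(2^{9}:2)$.
   Context: For $v\equiv 1,3\pmod 6$, $\chi'(v)$ denotes the minimum over all Steiner triple systems $\mathrm{STS}(v)$ of the least number of partial parallel classes into which its block set can be partitioned. A partial parallel class (PPC) of a set $Y$ is a set of pairwise disjoint blocks contained in $Y$; a parallel class (PC) of $Y$ is a PPC whose union is $Y$. An incomplete STS $\mathrm{STS}(v,h)$ is $(Y,H,\mathcal{B})$ with $|Y|=v$, $H\subseteq Y$, $|H|=h$, $\mathcal{B}$ a set of $3$-subsets such that each pair of $Y$ not inside $H$ lies in exactly one block and no pair inside $H$ lies in a block; it is good colorable ($\mathrm{gcSTS}(v,h)$) if $\mathcal{B}$ can be partitioned into $\chi'(v)$ PPCs of $Y$ of which $\chi'(v)-\frac{v-h}{2}$ are PPCs of $Y\setminus H$. A $\mathrm{GDD}(2,3,gn)$ of type $g^n$ is $(Z,\mathcal{G},\mathcal{B})$ with $\mathcal{G}$ a partition of $Z$ into $n$ groups of size $g$ and $\mathcal{B}$ a set of $3$-subsets each meeting every group in at most one point such that each pair of points from distinct groups lies in exactly one block; it is resolvable ($\mathrm{RGDD}$) if $\mathcal{B}$ partitions into PCs of $Z$. A $\mathrm{CQS}(g^n:s)$ is $(X,S,\mathcal{G},\mathcal{A})$ with $S\subseteq X$, $|S|=s$, $\mathcal{G}$ a partition of $X\setminus S$ into $n$ groups of size $g$, $\mathcal{A}$ a set of $4$-subsets of $X$ such that every $3$-subset of $X$ not contained in any $S\cup G$ ($G\in\mathcal{G}$) lies in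 exactly one block and no $3$-subset of any $S\cup G$ lies in a block. Let $\mathcal{A}_x=\{A\setminus\{x\}:x\in A\in\mathcal{A}\}$. A ${}^{2}\mathrm{cDCQS}(g^n:2)$ is a $\mathrm{CQS}(g^n:2)$ such that (1) for each $x\in G\in\mathcal{G}$, $(X\setminus\{x\},(G\cup S)\setminus\{x\},\mathcal{A}_x)$ is a $\mathrm{gcSTS}(gn+1,g+1)$; (2) for each $x\in S$, $(X\setminus S,\mathcal{G},\mathcal{A}_x)$ is an $\mathrm{RGDD}(2,3,gn)$ of type $g^n$. *)

From mathcomp Require Import all_boot.
Set Implicit Arguments. Unset Strict Implicit. Unset Printing Implicit Defensive.

Section Designs.
Variable T : finType.

Definition PPC (Y : {set T}) (C : {set {set T}}) : Prop :=
  (forall B, B \in C -> B \subset Y) /\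
  (forall B1 B2, B1 \in C -> B2 \in C -> B1 != B2 -> [disjoint B1 & B2]).

Definition PC (Y : {set T}) (C : {set {set T}}) : Prop :=
  PPC Y C /\ cover C = Y.

(* Incomplete STS(v,h) (Y,H,Bs) with v = #|Y|, h = #|H|. *)
Definition ISTS (Y H : {set T}) (Bs : {set {set T}}) : Prop :=
  H \subset Y /\
  (forall B, B \in Bs -> B \subset Y /\ #|B| = 3) /\
  (forall a b, a \in Y -> b \in Y -> a != b ->
     #|[set B in Bs | (a \in B) && (b \in B)]| =
       (if (a \in H) && (b \in H) then 0 else 1)).

Definition STS (Y : {set T}) (Bs : {set {set T}}) : Prop := ISTS Y set0 Bs.

Definition colorable (Y : {set T}) (Bs : {set {set T}}) (k : nat) : Prop :=
  exists P : {set {set {set T}}},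
    partition P Bs /\ #|P| = k /\ (forall C, C \in P -> PPC Y C).

Definition GDD (Z : {set T}) (Gs : {set {set T}}) (Bs : {set {set T}})
    (g n : nat) : Prop :=
  partition Gs Z /\ #|Gs| = n /\ (forall G, G \in Gs -> #|G| = g) /\
  (forall B, B \in Bs -> B \subset Z /\ #|B| = 3 /\
      forall G, G \in Gs -> #|B :&: G| <= 1) /\
  (forall a b, a \in Z -> b \in Z -> a != b ->
     ~~ [exists G in Gs, (a \in G) && (b \in G)] ->
     #|[set B in Bs | (a \in B) && (b \in B)]| = 1).

Definition RGDD (Z : {set T}) (Gs : {set {set T}}) (Bs : {set {set T}})
    (g n : nat) : Prop :=
  GDD Z Gs Bs g n /\
  exists P : {set {set {set T}}},
    partition P Bs /\ (forall C, C \in P -> PC Z C).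

Definition derived (A : {set {set T}}) (x : T) : {set {set T}} :=
  [set B :\ x | B in A & x \in B].

(* CQS(g^n : s) on the whole type T, with point set X = [set: T]. *)
Definition CQS (g n s : nat) (S : {set T}) (Gs : {set {set T}})
    (A : {set {set T}}) : Prop :=
  #|S| = s /\ partition Gs (~: S) /\ #|Gs| = n /\
  (forall G, G \in Gs -> #|G| = g) /\
  (forall B, B \in A -> #|B| = 4) /\
  (forall t : {set T}, #|t| = 3 ->
     if [exists G in Gs, t \subset S :|: G]
     then #|[set B in A | t \subset B]| = 0
     else #|[set B in A | t \subset B]| = 1).

End Designs.

Definition is_chi' (v k : nat) : Prop :=
  (exists Bs : {set {set 'I_v}}, STS [set: 'I_v] Bs /\ colorable [set: 'I_v] Bs k) /\
  (forall (Bs : {set {set 'I_v}}) (m : nat),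
      STS [set: 'I_v] Bs -> colorable [set: 'I_v] Bs m -> k <= m).

(* good colorable incomplete STS(v,h), v = #|Y|, h = #|H|. *)
Definition gcSTS (T : finType) (Y H : {set T}) (Bs : {set {set T}}) : Prop :=
  ISTS Y H Bs /\
  exists k, is_chi' #|Y| k /\
    exists P : {set {set {set T}}},
      partition P Bs /\ #|P| = k /\ (forall C, C \in P -> PPC Y C) /\
      exists Q : {set {set {set T}}},
        Q \subset P /\ #|Q| = k - (#|Y| - #|H|) %/ 2 /\
        (forall C, C \in Q -> PPC (Y :\: H) C).

Definition cDCQS2 (T : finType) (g n : nat) (S : {set T}) (Gs : {set {set T}})
    (A : {set {set T}}) : Prop :=
  CQS g n 2 S Gs A /\
  (forall G x, G \in Gs -> x \in G ->
     gcSTS ([set: T] :\ x) ((G :|: S) :\ x) (derived A x)) /\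
  (forall x, x \in S -> RGDD (~: S) Gs (derived A x) g n).

(* The design is explicit: 276 blocks of size 4 on the points 0..19, with S = {18, 19} and
   the groups {i, i + 9}.  All defining properties are finite checks, which are evaluated on
   lists of naturals and transferred to finite sets of ['I_n]; the derived designs come with
   explicit certificates (colorings whose first two classes avoid the hole, and resolutions).
   The one non-finite ingredient is chi'(19) = 10: an STS(19) has 19 * 18 / 6 = 57 blocks and a
   partial parallel class of 19 points has at most 6 of them, so 10 classes are needed, and an
   explicit 10-coloring of an STS(19) shows that they suffice. *)

From mathcomp Require Import all_boot zify.
Set Implicit Arguments. Unset Strict Implicit. Unset Printing Implicit Defensive.

Lemma uniq_flatten_mem_eq (X : eqType) (ss : seq (seq X)) s1 s2 x :
  uniq (flatten ss) -> s1 \in ss -> s2 \in ss -> x \in s1 -> x \in s2 -> s1 = s2.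
Proof.
elim: ss => //= s ss IHss; rewrite cat_uniq => /and3P[_ s_ss uniq_ss].
have notin_rest t : t \in ss -> x \in t -> x \notin s.
  move=> t_ss x_t; apply: contra s_ss => x_s.
  by apply/hasP; exists x => //; apply/flattenP; exists t.
rewrite !inE => /predU1P[-> | s1_ss] /predU1P[-> | s2_ss] x1 x2 //.
- by rewrite (negPf (notin_rest _ s2_ss x2)) in x1.
- by rewrite (negPf (notin_rest _ s1_ss x1)) in x2.
- exact: IHss.
Qed.

Lemma uniq_flatten_nonnil (X : eqType) (ss : seq (seq X)) :
  uniq (flatten ss) -> [::] \notin ss -> uniq ss.
Proof.
elim: ss => //= s ss IHss; rewrite cat_uniq inE negb_or.
move=> /and3P[_ s_ss uniq_ss] /andP[s_nil nil_ss].
rewrite IHss // andbT; apply: contra s_ss => s_in.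
case: s s_nil s_in => // x s _ s_in; apply/hasP; exists x; last by rewrite inE eqxx.
by apply/flattenP; exists (x :: s) => //; rewrite inE eqxx.
Qed.

Section SetSeq.
Variable T : finType.
Implicit Types (s : seq T).

Lemma card_set_seq s : uniq s -> #|[set:: s]| = size s.
Proof. by move=> /card_uniqP <-; rewrite cardsE. Qed.

Lemma card_set_seq_pred s (P : pred T) :
  uniq s -> #|[set x in [set:: s] | P x]| = count P s.
Proof.
move=> uniq_s; have -> : [set x in [set:: s] | P x] = [set:: filter P s].
  by apply/setP => x; rewrite !inE mem_filter andbC.
by rewrite card_set_seq ?size_filter ?filter_uniq.
Qed.

Lemma existsb_set_seq s (P : pred T) : [exists x in [set:: s], P x] = has P s.
Proof.
apply/existsP/hasP => [[x /andP[]] | [x x_s Px]]; first by rewrite inE; exists x.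
by exists x; rewrite inE x_s.
Qed.

End SetSeq.

Section SetSeqs.
Variable T : finType.
Implicit Types (ss : seq (seq T)).

Lemma cover_set_seqs ss : cover [set:: [seq [set:: s] | s <- ss]] = [set:: flatten ss].
Proof.
apply/setP => x; rewrite inE; apply/bigcupP/flattenP => [[C] | [s s_ss x_s]].
  by rewrite inE => /mapP[s s_ss ->]; rewrite inE => x_s; exists s.
by exists [set:: s]; rewrite !inE ?map_f.
Qed.

Lemma trivIset_set_seqs ss :
  uniq (flatten ss) -> trivIset [set:: [seq [set:: s] | s <- ss]].
Proof.
move=> uniq_ss; apply/trivIsetP => C1 C2; rewrite !inE => /mapP[s1 s1_ss ->] /mapP[s2 s2_ss ->] neq.
rewrite -setI_eq0; apply/eqP/setP => x; rewrite !inE; apply/andP => -[x1 x2].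
by rewrite (uniq_flatten_mem_eq uniq_ss s1_ss s2_ss x1 x2) eqxx in neq.
Qed.

Lemma partition_set_seqs ss : uniq (flatten ss) -> [::] \notin ss ->
  partition [set:: [seq [set:: s] | s <- ss]] [set:: flatten ss].
Proof.
move=> uniq_ss nil_ss; apply/and3P; split.
- by rewrite cover_set_seqs.
- exact: trivIset_set_seqs.
rewrite inE; apply/mapP => -[[|x s] s_ss s0]; first by rewrite s_ss in nil_ss.
by have := in_set0 x; rewrite s0 !inE eqxx.
Qed.

Lemma card_set_seqs ss : uniq (flatten ss) -> [::] \notin ss ->
  #|[set:: [seq [set:: s] | s <- ss]]| = size ss.
Proof.
move=> uniq_ss nil_ss; rewrite card_set_seq ?size_map // map_inj_in_uniq.
  exact: uniq_flatten_nonnil.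
move=> [|x s1] s2 s1_ss s2_ss eq12; first by rewrite s1_ss in nil_ss.
apply: (uniq_flatten_mem_eq uniq_ss s1_ss s2_ss (x := x)); first by rewrite inE eqxx.
by rewrite -[x \in s2]in_set -eq12 !inE eqxx.
Qed.

End SetSeqs.

Section Counting.
Variable T : finType.
Implicit Types (B Y : {set T}) (Bs C : {set {set T}}).

Lemma sum_ordered_pairs B :
  \sum_a \sum_(b | b != a) ((a \in B) && (b \in B) : nat) = #|B| * #|B|.-1.
Proof.
rewrite (bigID [in B]) /= [X in _ + X]big1 => [|a /negPf aB]; last by rewrite big1 // aB.
rewrite addn0 -sum_nat_const; apply: eq_bigr => a aB.
rewrite (cardsD1 a) aB add1n /= -sum1_card big_mkcond [RHS]big_mkcond /=.
by apply: eq_bigr => b _; rewrite !inE; case: (b != a).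
Qed.

Lemma STS_card Bs : STS [set: T] Bs -> #|Bs| * 6 = #|T| * #|T|.-1.
Proof.
case=> _ [block3 pair1].
have pair_once a b : b != a -> \sum_(B in Bs) ((a \in B) && (b \in B) : nat) = 1.
  move=> ba; have := pair1 a b (in_setT a) (in_setT b); rewrite eq_sym ba in_set0 /= => /(_ isT) <-.
  by rewrite -sum1dep_card big_mkcondr.
(* Double count the triples (B, a, b) with a != b both in B. *)
transitivity (\sum_(B in Bs) \sum_a \sum_(b | b != a) ((a \in B) && (b \in B) : nat)).
  rewrite (eq_bigr (fun _ => 6)) ?sum_nat_const // => B /block3[_ card3].
  by rewrite sum_ordered_pairs card3.
rewrite exchange_big -sum_nat_const; apply: eq_bigr => a _.
rewrite exchange_big (eq_bigr (fun _ => 1)) => [|b]; last exact: pair_once.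
by rewrite sum1dep_card -(cardsC1 a); apply: eq_card => b; rewrite !inE.
Qed.

Lemma PPC_card Y C : PPC Y C -> {in C, forall B, #|B| = 3} -> #|C| * 3 <= #|Y|.
Proof.
case=> sub_Y disj card3; have /eqP triv_C : trivIset C by apply/trivIsetP.
have <- : \sum_(B in C) #|B| = #|C| * 3 by rewrite -sum_nat_const; apply: eq_bigr.
rewrite triv_C; apply: subset_leq_card.
by apply/bigcupsP.
Qed.

Lemma colorable_card Y Bs m : {in Bs, forall B, #|B| = 3} -> colorable Y Bs m ->
  #|Bs| <= m * (#|Y| %/ 3).
Proof.
move=> card3 [P [part_P [<- PPC_P]]]; rewrite (card_partition part_P) -sum_nat_const.
apply: leq_sum => C C_P; rewrite leq_divRL //; apply: PPC_card (PPC_P C C_P) _ => B B_C.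
by apply: card3; rewrite -(cover_partition part_P); apply/bigcupP; exists C.
Qed.

Lemma STS_colorable_lb Bs m : STS [set: T] Bs -> colorable [set: T] Bs m ->
  #|T| * #|T|.-1 <= 6 * (m * (#|T| %/ 3)).
Proof.
move=> STS_Bs; have [_ [block3 _]] := STS_Bs.
move/(colorable_card (fun B B_Bs => (block3 B B_Bs).2)); rewrite cardsT => le_m.
by rewrite -(STS_card STS_Bs) mulnC leq_pmul2l.
Qed.

End Counting.

Section NatSets.
Variable n : nat.
Implicit Types (l Yl Hl Zl sl : seq nat) (ls bs c gs : seq (seq nat)) (cls : seq (seq (seq nat))).

Definition natset l : {set 'I_n} := [set i : 'I_n | val i \in l].

Definition natsets ls : {set {set 'I_n}} := [set:: map natset ls].

(* Strictly increasing lists below [n] are the canonical codes of the subsets of ['I_n]. *)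
Definition wf_natseq l := sorted ltn l && all (gtn n) l.

Definition wf_blocks ls := uniq ls && all wf_natseq ls.

Lemma in_natset l i : (i \in natset l) = (val i \in l).
Proof. by rewrite inE. Qed.

Lemma natset_pmap l : natset l = [set:: pmap insub l].
Proof. by apply/setP => i; rewrite !inE mem_pmap_sub. Qed.

Lemma card_natset_le l : #|natset l| <= size l.
Proof. by rewrite natset_pmap cardsE (leq_trans (card_size _)) // size_pmap_sub count_size. Qed.

Lemma card_natset l : uniq l -> all (gtn n) l -> #|natset l| = size l.
Proof.
move=> uniq_l lt_n; rewrite natset_pmap card_set_seq ?pmap_sub_uniq // size_pmap_sub.
by apply/eqP; rewrite -all_count.
Qed.

Lemma card_wf_natset l : wf_natseq l -> #|natset l| = size l.
Proof. by case/andP => sorted_l; apply/card_natset/(sorted_uniq ltn_trans ltnn). Qed.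

Lemma eq_natset l1 l2 : l1 =i l2 -> natset l1 = natset l2.
Proof. by move=> eq12; apply/setP => i; rewrite !inE eq12. Qed.

Lemma natsetT : [set: 'I_n] = natset (iota 0 n).
Proof. by apply/setP => i; rewrite !inE mem_iota ltn_ord. Qed.

Lemma natsetU l1 l2 : natset l1 :|: natset l2 = natset (l1 ++ l2).
Proof. by apply/setP => i; rewrite !inE mem_cat. Qed.

Lemma natsetD l1 l2 : natset l1 :\: natset l2 = natset [seq i <- l1 | i \notin l2].
Proof. by apply/setP => i; rewrite !inE mem_filter. Qed.

Lemma natsetI l1 l2 : natset l1 :&: natset l2 = natset [seq i <- l1 | i \in l2].
Proof. by apply/setP => i; rewrite !inE mem_filter andbC. Qed.

Lemma natsetD1 l x : natset l :\ x = natset [seq i <- l | i != val x].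
Proof. by apply/setP => i; rewrite !inE mem_filter. Qed.

Lemma subset_natset l1 l2 :
  all (gtn n) l1 -> (natset l1 \subset natset l2) = all (fun i => i \in l2) l1.
Proof.
move=> /allP lt_n; apply/subsetP/allP => [sub i i_l1 | sub i]; last by rewrite !inE => /sub.
by have := sub (Ordinal (lt_n i i_l1)); rewrite !inE; apply.
Qed.

Lemma natset_inj : {in wf_natseq &, injective natset}.
Proof.
move=> l1 l2 /andP[sorted1 /allP lt1] /andP[sorted2 /allP lt2] eq12.
apply: (irr_sorted_eq ltn_trans ltnn) => // i.
have [i_n | n_i] := ltnP i n.
  by rewrite -[i]/(val (Ordinal i_n)) -!in_natset eq12.
by apply/idP/idP => [/lt1 | /lt2] /=; rewrite ltnNge n_i.
Qed.

Lemma natset_enum (A : {set 'I_n}) : wf_natseq [seq val i | i <- enum A] /\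
  A = natset [seq val i | i <- enum A].
Proof.
split; last by apply/setP => i; rewrite inE (mem_map val_inj) mem_enum.
apply/andP; split; last by apply/allP => _ /mapP[i _ ->]; apply: ltn_ord.
rewrite -[enum _](eq_filter (mem_enum _)) -(eq_filter (mem_map val_inj _)) -filter_map.
by rewrite (sorted_filter ltn_trans) // unlock val_ord_enum iota_ltn_sorted.
Qed.

Lemma uniq_map_natset ls : wf_blocks ls -> uniq (map natset ls).
Proof.
case/andP => uniq_ls /allP wf_ls.
by rewrite map_inj_in_uniq // => l1 l2 /wf_ls wf1 /wf_ls wf2; apply: natset_inj.
Qed.

Lemma card_natsets_pred ls (P : pred {set 'I_n}) :
  wf_blocks ls -> #|[set B in natsets ls | P B]| = count (P \o natset) ls.
Proof. by move=> wf_ls; rewrite card_set_seq_pred ?count_map ?uniq_map_natset. Qed.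

Lemma natsets_set_seqs ls : natsets ls = [set:: [seq [set:: s] | s <- map (pmap insub) ls]].
Proof. by rewrite /natsets -map_comp (eq_map natset_pmap). Qed.

Lemma flatten_pmap_insub ls : flatten (map (pmap insub) ls) = pmap insub (flatten ls) :> seq 'I_n.
Proof. by elim: ls => //= l ls IHls; rewrite pmap_cat IHls. Qed.

Lemma cover_natsets ls : cover (natsets ls) = natset (flatten ls).
Proof. by rewrite natsets_set_seqs cover_set_seqs flatten_pmap_insub natset_pmap. Qed.

Lemma trivIset_natsets ls : uniq (flatten ls) -> trivIset (natsets ls).
Proof.
by move=> uniq_ls; rewrite natsets_set_seqs trivIset_set_seqs // flatten_pmap_insub pmap_sub_uniq.
Qed.

Section NonEmpty.
Variable ls : seq (seq nat).
Hypotheses (uniq_ls : uniq (flatten ls)) (nil_ls : [::] \notin ls) (lt_ls : all (all (gtn n)) ls).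

Let nil_pmap_ls : [::] \notin [seq pmap insub l : seq 'I_n | l <- ls].
Proof.
apply/mapP => -[[|i l] l_ls]; first by case/negP: nil_ls.
have /andP[i_n _] := allP lt_ls _ l_ls.
by move/(congr1 (fun s => Ordinal i_n \in s)); rewrite mem_pmap_sub inE eqxx.
Qed.

Let uniq_pmap_ls : uniq (flatten (map (pmap insub) ls) : seq 'I_n).
Proof. by rewrite flatten_pmap_insub pmap_sub_uniq. Qed.

Lemma partition_natsets : partition (natsets ls) (natset (flatten ls)).
Proof.
rewrite natsets_set_seqs natset_pmap -flatten_pmap_insub.
exact: partition_set_seqs uniq_pmap_ls nil_pmap_ls.
Qed.

Lemma card_natsets : #|natsets ls| = size ls.
Proof. by rewrite natsets_set_seqs (card_set_seqs uniq_pmap_ls nil_pmap_ls) size_map. Qed.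

End NonEmpty.

Lemma PPC_natsets Yl c :
  uniq (flatten c) -> all (fun i => i \in Yl) (flatten c) -> PPC (natset Yl) (natsets c).
Proof.
move=> uniq_c /allP sub_Yl; split; last exact/trivIsetP/trivIset_natsets.
move=> B; rewrite inE => /mapP[l l_c ->]; apply/subsetP => i; rewrite !inE => i_l.
by apply: sub_Yl; apply/flattenP; exists l.
Qed.

Lemma PC_natsets Zl c : uniq (flatten c) -> all (fun i => i \in Zl) (flatten c) ->
  all (fun i => i \in flatten c) Zl -> PC (natset Zl) (natsets c).
Proof.
move=> uniq_c sub_Zl /allP Zl_sub; split; first exact: PPC_natsets.
rewrite cover_natsets; apply/setP => i; rewrite !inE.
by apply/idP/idP => [/(allP sub_Zl) | /Zl_sub].
Qed.

Definition classes (cls : seq (seq (seq nat))) : {set {set {set 'I_n}}} :=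
  [set:: map natsets cls].

Section Classes.
Variable cls : seq (seq (seq nat)).
Hypotheses (wf_cls : wf_blocks (flatten cls)) (nil_cls : [::] \notin cls).

Let classes_set_seqs : classes cls = [set:: [seq [set:: s] | s <- map (map natset) cls]].
Proof. by rewrite /classes -map_comp. Qed.

Let uniq_natset_cls : uniq (flatten (map (map natset) cls)).
Proof. by rewrite -map_flatten uniq_map_natset. Qed.

Let nil_natset_cls : [::] \notin map (map natset) cls.
Proof. by apply/mapP => -[[|l c] c_cls] //; case/negP: nil_cls. Qed.

Lemma partition_classes : partition (classes cls) (natsets (flatten cls)).
Proof.
rewrite classes_set_seqs /natsets map_flatten.
exact: partition_set_seqs uniq_natset_cls nil_natset_cls.
Qed.

Lemma card_classes : #|classes cls| = size cls.
Proof.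
by rewrite classes_set_seqs (card_set_seqs uniq_natset_cls nil_natset_cls) size_map.
Qed.

End Classes.

Definition is_ppc Yl (c : seq (seq nat)) :=
  uniq (flatten c) && all (fun i => i \in Yl) (flatten c).

Definition is_coloring Yl bs cls :=
  [&& perm_eq (flatten cls) bs, [::] \notin cls & all (is_ppc Yl) cls].

Lemma coloring_natsets Yl bs cls : wf_blocks bs -> is_coloring Yl bs cls ->
  [/\ partition (classes cls) (natsets bs), #|classes cls| = size cls &
      {in classes cls, forall C, PPC (natset Yl) C}].
Proof.
move=> /andP[uniq_bs wf_bs] /and3P[perm_bs nil_cls ppc_cls].
have wf_cls : wf_blocks (flatten cls).
  by rewrite /wf_blocks (perm_uniq perm_bs) uniq_bs (eq_all_r (perm_mem perm_bs)).
have -> : natsets bs = natsets (flatten cls).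
  by apply/setP => B; rewrite !inE (perm_mem (perm_map natset perm_bs)).
split; [exact: partition_classes | exact: card_classes | ].
move=> C; rewrite inE => /mapP[c c_cls ->].
by have /andP[] := allP ppc_cls c c_cls; apply: PPC_natsets.
Qed.

Definition derive x ls := [seq [seq i <- l | i != x] | l <- ls & x \in l].

Lemma derived_natsets ls x : derived (natsets ls) x = natsets (derive (val x) ls).
Proof.
apply/setP => B; rewrite inE; apply/imsetP/mapP => [[A] |].
  rewrite !inE => /andP[/mapP[l l_ls ->] x_l] ->.
  exists [seq i <- l | i != val x]; last exact: natsetD1.
  by apply/map_f; rewrite mem_filter -in_natset x_l.
case=> l' /mapP[l]; rewrite mem_filter => /andP[x_l l_ls] -> ->.
by exists (natset l); rewrite ?natsetD1 // !inE map_f.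
Qed.

Definition pair_count bs a b := count (fun l => (a \in l) && (b \in l)) bs.

Definition is_ists Yl Hl bs :=
  [&& all (fun i => i \in Yl) Hl,
      all (fun l => (size l == 3) && all (fun i => i \in Yl) l) bs &
      all (fun a => all (fun b => (a != b) ==>
        (pair_count bs a b == if (a \in Hl) && (b \in Hl) then 0 else 1)) Yl) Yl].

Lemma ISTS_natsets Yl Hl bs :
  wf_blocks bs -> is_ists Yl Hl bs -> ISTS (natset Yl) (natset Hl) (natsets bs).
Proof.
move=> wf_bs /and3P[/allP H_Y /allP blocks_ok /allP pairs_ok].
split; first by apply/subsetP => i; rewrite !inE => /H_Y.
split=> [B | a b].
  rewrite inE => /mapP[l l_bs ->]; have /andP[/eqP <- /allP l_Y] := blocks_ok l l_bs.
  split; first by apply/subsetP => i; rewrite !inE => /l_Y.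
  by rewrite card_wf_natset // (allP (proj2 (andP wf_bs))).
rewrite !in_natset => a_Y b_Y ab; rewrite card_natsets_pred //.
have := allP (pairs_ok _ a_Y) _ b_Y; rewrite val_eqE ab => /eqP <-.
by apply: eq_count => l; rewrite /= !in_natset.
Qed.

Definition is_gdd Zl gs bs :=
  [&& all (fun l => [&& size l == 3, all (fun i => i \in Zl) l &
        all (fun g => count (fun i => i \in g) l <= 1) gs]) bs &
      all (fun a => all (fun b => (a != b) ==>
        has (fun g => (a \in g) && (b \in g)) gs || (pair_count bs a b == 1)) Zl) Zl].

Lemma GDD_natsets g k Zl gs bs :
  partition (natsets gs) (natset Zl) -> #|natsets gs| = k ->
  {in natsets gs, forall G : {set 'I_n}, #|G| = g} -> wf_blocks bs -> is_gdd Zl gs bs ->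
  GDD (natset Zl) (natsets gs) (natsets bs) g k.
Proof.
move=> part_gs card_gs card_G wf_bs /andP[/allP blocks_ok /allP pairs_ok].
do 3 split => //; split=> [B | a b].
  rewrite inE => /mapP[l l_bs ->]; have /and3P[/eqP <- /allP l_Z /allP meet1] := blocks_ok l l_bs.
  split; first by apply/subsetP => i; rewrite !inE => /l_Z.
  split; first by rewrite card_wf_natset // (allP (proj2 (andP wf_bs))).
  move=> G; rewrite inE => /mapP[g' g'_gs ->]; rewrite natsetI.
  by rewrite (leq_trans (card_natset_le _)) // size_filter meet1.
rewrite !in_natset => a_Z b_Z ab.
have -> : [exists G in natsets gs, (a \in G) && (b \in G)] =
          has (fun h => (val a \in h) && (val b \in h)) gs.
  by rewrite existsb_set_seq has_map; apply: eq_has => h; rewrite /= !in_natset.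
have := allP (pairs_ok _ a_Z) _ b_Z; rewrite val_eqE ab /=.
case: has => //= /eqP <- _; rewrite card_natsets_pred //.
by apply: eq_count => l; rewrite /= !in_natset.
Qed.

Definition is_resolution Zl bs cls :=
  is_coloring Zl bs cls && all (fun c => all (fun i => i \in flatten c) Zl) cls.

Lemma RGDD_natsets g k Zl gs bs cls :
  GDD (natset Zl) (natsets gs) (natsets bs) g k -> wf_blocks bs -> is_resolution Zl bs cls ->
  RGDD (natset Zl) (natsets gs) (natsets bs) g k.
Proof.
move=> gdd wf_bs /andP[col /allP covers]; split => //; exists (classes cls).
have [part _ _] := coloring_natsets wf_bs col; split => // C; rewrite inE => /mapP[c c_cls ->].
have /and3P[_ _ /allP ppc] := col; have /andP[uniq_c sub_Z] := ppc c c_cls.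
exact: PC_natsets (covers c c_cls).
Qed.

Definition cqs_triple_ok sl gs bs t :=
  count (fun l => all (fun i => i \in l) t) bs ==
  if has (fun g => all (fun i => i \in sl ++ g) t) gs then 0 else 1.

Definition is_cqs sl gs bs :=
  all (fun l => size l == 4) bs &&
  all (fun x => all (fun y => all (fun z => (x < y < z) ==> cqs_triple_ok sl gs bs [:: x; y; z])
    (iota 0 n)) (iota 0 n)) (iota 0 n).

Lemma CQS_natsets g k sl gs bs :
  wf_natseq sl -> partition (natsets gs) (~: natset sl) -> #|natsets gs| = k ->
  {in natsets gs, forall G : {set 'I_n}, #|G| = g} -> wf_blocks bs -> is_cqs sl gs bs ->
  CQS g k (size sl) (natset sl) (natsets gs) (natsets bs).
Proof.
move=> wf_sl part_gs card_gs card_G wf_bs /andP[/allP size4 /allP triples_ok].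
split; first exact: card_wf_natset.
do 3 split => //; split=> [B | t].
  rewrite inE => /mapP[l l_bs ->]; rewrite card_wf_natset ?(eqP (size4 l l_bs)) //.
  exact: (allP (proj2 (andP wf_bs))).
have [wf_t ->] := natset_enum t; move: (map _ _) wf_t => l wf_l card_l.
have {card_l} : size l = 3 by rewrite -card_wf_natset.
case: l wf_l => [|a [|b [|c [|]]]] // /andP[/= /and3P[ab bc _] /and4P[a_n b_n c_n _]] _.
have lt_n : all (gtn n) [:: a; b; c] by rewrite /= a_n b_n c_n.
have -> : [exists G in natsets gs, natset [:: a; b; c] \subset natset sl :|: G] =
          has (fun h => all (fun i => i \in sl ++ h) [:: a; b; c]) gs.
  by rewrite existsb_set_seq has_map; apply: eq_has => h; rewrite /= natsetU subset_natset.
rewrite card_natsets_pred // (@eq_count _ _ (fun l => all (fun i => i \in l) [:: a; b; c])).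
  have I_n i : i < n -> i \in iota 0 n by rewrite mem_iota.
  have /implyP := allP (allP (triples_ok a (I_n a a_n)) b (I_n b b_n)) c (I_n c c_n).
  by rewrite ab bc => /(_ isT) /eqP ->; case: has.
by move=> l; rewrite /= subset_natset.
Qed.

Definition is_gc_certificate Yl Hl bs cls :=
  [&& wf_natseq Yl, wf_natseq Hl, wf_blocks bs, is_ists Yl Hl bs, is_coloring Yl bs cls &
      all (is_ppc [seq i <- Yl | i \notin Hl]) (take (size cls - (size Yl - size Hl) %/ 2) cls)].

Lemma gcSTS_natsets Yl Hl bs cls :
  is_chi' (size Yl) (size cls) -> is_gc_certificate Yl Hl bs cls ->
  gcSTS (natset Yl) (natset Hl) (natsets bs).
Proof.
move=> chi /and5P[wf_Y wf_H wf_bs ists /andP[col hole]]; rewrite /gcSTS !card_wf_natset //.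
split; first exact: ISTS_natsets.
exists (size cls); split => //; have [part card_P PPC_P] := coloring_natsets wf_bs col.
exists (classes cls); do 3 split => //.
set j := size cls - _ in hole *; set front := take j cls.
have /and3P[perm_bs nil_cls _] := col.
have wf_front : wf_blocks (flatten front).
  move: wf_bs; rewrite /wf_blocks -(perm_uniq perm_bs) -(eq_all_r (perm_mem perm_bs)).
  by rewrite -[cls](cat_take_drop j) flatten_cat cat_uniq all_cat => /andP[/andP[-> _] /andP[-> _]].
have col_front : is_coloring [seq i <- Yl | i \notin Hl] (flatten front) front.
  by rewrite /is_coloring perm_refl hole andbT; apply: contra nil_cls; apply: mem_take.
have [_ card_Q PPC_Q] := coloring_natsets wf_front col_front.
exists (classes front); split.
  by apply/subsetP => C; rewrite !inE => /mapP[c /mem_take c_cls ->]; apply: map_f.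
by rewrite card_Q size_takel ?leq_subr // natsetD.
Qed.

End NatSets.

Definition sts19_coloring : seq (seq (seq nat)) :=
  [:: [:: [:: 6; 15; 16]; [:: 1; 10; 12]; [:: 2; 4; 7]; [:: 3; 13; 14]; [:: 8; 17; 18]];
      [:: [:: 1; 14; 16]; [:: 3; 10; 15]; [:: 4; 12; 13]; [:: 6; 9; 11]; [:: 0; 5; 7]];
      [:: [:: 7; 12; 17]; [:: 9; 10; 18]; [:: 1; 4; 5]; [:: 0; 14; 15]; [:: 3; 8; 11]; [:: 2; 13; 16]];
      [:: [:: 11; 14; 17]; [:: 4; 15; 18]; [:: 1; 6; 7]; [:: 5; 10; 13]; [:: 2; 8; 12]; [:: 0; 9; 16]];
      [:: [:: 3; 16; 17]; [:: 5; 11; 18]; [:: 0; 2; 6]; [:: 1; 8; 15]; [:: 4; 10; 14]; [:: 7; 9; 13]];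
      [:: [:: 2; 5; 17]; [:: 0; 1; 18]; [:: 6; 8; 10]; [:: 4; 11; 16]; [:: 3; 9; 12]];
      [:: [:: 4; 6; 17]; [:: 12; 16; 18]; [:: 7; 11; 15]; [:: 1; 2; 3]; [:: 0; 8; 13]; [:: 5; 9; 14]];
      [:: [:: 1; 9; 17]; [:: 6; 13; 18]; [:: 0; 3; 4]; [:: 7; 8; 14]; [:: 5; 12; 15]; [:: 2; 10; 11]];
      [:: [:: 13; 15; 17]; [:: 2; 14; 18]; [:: 7; 10; 16]; [:: 0; 11; 12]; [:: 4; 8; 9]; [:: 3; 5; 6]];
      [:: [:: 0; 10; 17]; [:: 3; 7; 18]; [:: 1; 11; 13]; [:: 2; 9; 15]; [:: 6; 12; 14]; [:: 5; 8; 16]]].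

Lemma is_chi'_19 : is_chi' 19 10.
Proof.
split=> [|Bs m STS_Bs col_m]; last first.
  by have := STS_colorable_lb STS_Bs col_m; rewrite card_ord (_ : 19 %/ 3 = 6) //=; lia.
pose bs := flatten sts19_coloring.
have wf_bs : wf_blocks 19 bs by vm_compute.
have ists : is_ists (iota 0 19) [::] bs by vm_compute.
have col : is_coloring (iota 0 19) bs sts19_coloring by vm_compute.
exists (natsets 19 bs); rewrite natsetT; split.
  rewrite /STS (_ : set0 = natset 19 [::]); first exact: ISTS_natsets wf_bs ists.
  by apply/setP => i; rewrite !inE.
have [part card_P PPC_P] := coloring_natsets wf_bs col.
exists (classes 19 sts19_coloring); split; first exact: part.
by split; [rewrite card_P | exact: PPC_P].
Qed.

Definition blocks : seq (seq nat) := [::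
  [:: 0; 1; 2; 19]; [:: 0; 1; 3; 7]; [:: 0; 1; 4; 5]; [:: 0; 1; 6; 8]; [:: 0; 1; 9; 14];
  [:: 0; 1; 10; 17]; [:: 0; 1; 11; 18]; [:: 0; 1; 12; 13]; [:: 0; 1; 15; 16]; [:: 0; 2; 3; 4];
  [:: 0; 2; 5; 6]; [:: 0; 2; 7; 8]; [:: 0; 2; 9; 16]; [:: 0; 2; 10; 18]; [:: 0; 2; 11; 13];
  [:: 0; 2; 12; 14]; [:: 0; 2; 15; 17]; [:: 0; 3; 5; 8]; [:: 0; 3; 6; 18]; [:: 0; 3; 9; 13];
  [:: 0; 3; 10; 16]; [:: 0; 3; 11; 12]; [:: 0; 3; 14; 17]; [:: 0; 3; 15; 19]; [:: 0; 4; 6; 7];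
  [:: 0; 4; 8; 19]; [:: 0; 4; 9; 12]; [:: 0; 4; 10; 13]; [:: 0; 4; 11; 16]; [:: 0; 4; 14; 15];
  [:: 0; 4; 17; 18]; [:: 0; 5; 7; 18]; [:: 0; 5; 9; 10]; [:: 0; 5; 11; 15]; [:: 0; 5; 12; 17];
  [:: 0; 5; 13; 14]; [:: 0; 5; 16; 19]; [:: 0; 6; 9; 17]; [:: 0; 6; 10; 15]; [:: 0; 6; 11; 14];
  [:: 0; 6; 12; 19]; [:: 0; 6; 13; 16]; [:: 0; 7; 9; 11]; [:: 0; 7; 10; 12]; [:: 0; 7; 13; 15];
  [:: 0; 7; 14; 19]; [:: 0; 7; 16; 17]; [:: 0; 8; 9; 15]; [:: 0; 8; 10; 14]; [:: 0; 8; 11; 17];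
  [:: 0; 8; 12; 16]; [:: 0; 8; 13; 18]; [:: 0; 10; 11; 19]; [:: 0; 12; 15; 18]; [:: 0; 13; 17; 19];
  [:: 0; 14; 16; 18]; [:: 1; 2; 3; 5]; [:: 1; 2; 4; 8]; [:: 1; 2; 6; 7]; [:: 1; 2; 9; 18];
  [:: 1; 2; 10; 12]; [:: 1; 2; 11; 15]; [:: 1; 2; 13; 14]; [:: 1; 2; 16; 17]; [:: 1; 3; 4; 6];
  [:: 1; 3; 8; 18]; [:: 1; 3; 9; 16]; [:: 1; 3; 10; 11]; [:: 1; 3; 12; 14]; [:: 1; 3; 13; 15];
  [:: 1; 3; 17; 19]; [:: 1; 4; 7; 18]; [:: 1; 4; 9; 13]; [:: 1; 4; 10; 14]; [:: 1; 4; 11; 17];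
  [:: 1; 4; 12; 15]; [:: 1; 4; 16; 19]; [:: 1; 5; 6; 19]; [:: 1; 5; 7; 8]; [:: 1; 5; 9; 17];
  [:: 1; 5; 10; 13]; [:: 1; 5; 11; 14]; [:: 1; 5; 12; 16]; [:: 1; 5; 15; 18]; [:: 1; 6; 9; 15];
  [:: 1; 6; 10; 16]; [:: 1; 6; 11; 12]; [:: 1; 6; 13; 17]; [:: 1; 6; 14; 18]; [:: 1; 7; 9; 12];
  [:: 1; 7; 10; 15]; [:: 1; 7; 11; 16]; [:: 1; 7; 13; 19]; [:: 1; 7; 14; 17]; [:: 1; 8; 9; 10];
  [:: 1; 8; 11; 13]; [:: 1; 8; 12; 19]; [:: 1; 8; 14; 16]; [:: 1; 8; 15; 17]; [:: 1; 9; 11; 19];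
  [:: 1; 12; 17; 18]; [:: 1; 13; 16; 18]; [:: 1; 14; 15; 19]; [:: 2; 3; 6; 8]; [:: 2; 3; 7; 19];
  [:: 2; 3; 9; 12]; [:: 2; 3; 10; 15]; [:: 2; 3; 11; 14]; [:: 2; 3; 13; 17]; [:: 2; 3; 16; 18];
  [:: 2; 4; 5; 7]; [:: 2; 4; 6; 18]; [:: 2; 4; 9; 11]; [:: 2; 4; 10; 17]; [:: 2; 4; 12; 13];
  [:: 2; 4; 14; 16]; [:: 2; 4; 15; 19]; [:: 2; 5; 8; 18]; [:: 2; 5; 9; 15]; [:: 2; 5; 10; 14];
  [:: 2; 5; 11; 12]; [:: 2; 5; 13; 16]; [:: 2; 5; 17; 19]; [:: 2; 6; 9; 14]; [:: 2; 6; 10; 11];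
  [:: 2; 6; 12; 17]; [:: 2; 6; 13; 19]; [:: 2; 6; 15; 16]; [:: 2; 7; 9; 13]; [:: 2; 7; 10; 16];
  [:: 2; 7; 11; 17]; [:: 2; 7; 12; 18]; [:: 2; 7; 14; 15]; [:: 2; 8; 9; 17]; [:: 2; 8; 10; 13];
  [:: 2; 8; 11; 16]; [:: 2; 8; 12; 15]; [:: 2; 8; 14; 19]; [:: 2; 9; 10; 19]; [:: 2; 12; 16; 19];
  [:: 2; 13; 15; 18]; [:: 2; 14; 17; 18]; [:: 3; 4; 5; 19]; [:: 3; 4; 7; 8]; [:: 3; 4; 9; 10];
  [:: 3; 4; 11; 13]; [:: 3; 4; 12; 17]; [:: 3; 4; 14; 18]; [:: 3; 4; 15; 16]; [:: 3; 5; 6; 7];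
  [:: 3; 5; 9; 11]; [:: 3; 5; 10; 12]; [:: 3; 5; 13; 18]; [:: 3; 5; 14; 16]; [:: 3; 5; 15; 17];
  [:: 3; 6; 9; 19]; [:: 3; 6; 10; 13]; [:: 3; 6; 11; 17]; [:: 3; 6; 12; 16]; [:: 3; 6; 14; 15];
  [:: 3; 7; 9; 17]; [:: 3; 7; 10; 14]; [:: 3; 7; 11; 18]; [:: 3; 7; 12; 15]; [:: 3; 7; 13; 16];
  [:: 3; 8; 9; 14]; [:: 3; 8; 10; 19]; [:: 3; 8; 11; 15]; [:: 3; 8; 12; 13]; [:: 3; 8; 16; 17];
  [:: 3; 9; 15; 18]; [:: 3; 10; 17; 18]; [:: 3; 11; 16; 19]; [:: 3; 13; 14; 19]; [:: 4; 5; 6; 8];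
  [:: 4; 5; 9; 14]; [:: 4; 5; 10; 11]; [:: 4; 5; 12; 18]; [:: 4; 5; 13; 15]; [:: 4; 5; 16; 17];
  [:: 4; 6; 9; 16]; [:: 4; 6; 10; 12]; [:: 4; 6; 11; 19]; [:: 4; 6; 13; 14]; [:: 4; 6; 15; 17];
  [:: 4; 7; 9; 15]; [:: 4; 7; 10; 19]; [:: 4; 7; 11; 14]; [:: 4; 7; 12; 16]; [:: 4; 7; 13; 17];
  [:: 4; 8; 9; 18]; [:: 4; 8; 10; 15]; [:: 4; 8; 11; 12]; [:: 4; 8; 13; 16]; [:: 4; 8; 14; 17];
  [:: 4; 9; 17; 19]; [:: 4; 10; 16; 18]; [:: 4; 11; 15; 18]; [:: 4; 12; 14; 19]; [:: 5; 6; 9; 13];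
  [:: 5; 6; 10; 18]; [:: 5; 6; 11; 16]; [:: 5; 6; 12; 15]; [:: 5; 6; 14; 17]; [:: 5; 7; 9; 19];
  [:: 5; 7; 10; 17]; [:: 5; 7; 11; 13]; [:: 5; 7; 12; 14]; [:: 5; 7; 15; 16]; [:: 5; 8; 9; 12];
  [:: 5; 8; 10; 16]; [:: 5; 8; 11; 19]; [:: 5; 8; 13; 17]; [:: 5; 8; 14; 15]; [:: 5; 9; 16; 18];
  [:: 5; 10; 15; 19]; [:: 5; 11; 17; 18]; [:: 5; 12; 13; 19]; [:: 6; 7; 8; 19]; [:: 6; 7; 9; 10];
  [:: 6; 7; 11; 15]; [:: 6; 7; 12; 13]; [:: 6; 7; 14; 16]; [:: 6; 7; 17; 18]; [:: 6; 8; 9; 11];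
  [:: 6; 8; 10; 17]; [:: 6; 8; 12; 14]; [:: 6; 8; 13; 15]; [:: 6; 8; 16; 18]; [:: 6; 9; 12; 18];
  [:: 6; 10; 14; 19]; [:: 6; 11; 13; 18]; [:: 6; 16; 17; 19]; [:: 7; 8; 9; 16]; [:: 7; 8; 10; 11];
  [:: 7; 8; 12; 17]; [:: 7; 8; 13; 14]; [:: 7; 8; 15; 18]; [:: 7; 9; 14; 18]; [:: 7; 10; 13; 18];
  [:: 7; 11; 12; 19]; [:: 7; 15; 17; 19]; [:: 8; 9; 13; 19]; [:: 8; 10; 12; 18]; [:: 8; 11; 14; 18];
  [:: 8; 15; 16; 19]; [:: 9; 10; 11; 18]; [:: 9; 10; 12; 16]; [:: 9; 10; 13; 14]; [:: 9; 10; 15; 17];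
  [:: 9; 11; 12; 13]; [:: 9; 11; 14; 15]; [:: 9; 11; 16; 17]; [:: 9; 12; 14; 17]; [:: 9; 12; 15; 19];
  [:: 9; 13; 15; 16]; [:: 9; 13; 17; 18]; [:: 9; 14; 16; 19]; [:: 10; 11; 12; 14]; [:: 10; 11; 13; 17];
  [:: 10; 11; 15; 16]; [:: 10; 12; 13; 15]; [:: 10; 12; 17; 19]; [:: 10; 13; 16; 19]; [:: 10; 14; 15; 18];
  [:: 10; 14; 16; 17]; [:: 11; 12; 15; 17]; [:: 11; 12; 16; 18]; [:: 11; 13; 14; 16]; [:: 11; 13; 15; 19];
  [:: 11; 14; 17; 19]; [:: 12; 13; 14; 18]; [:: 12; 13; 16; 17]; [:: 12; 14; 15; 16]; [:: 13; 14; 15; 17];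
  [:: 15; 16; 17; 18]].

Definition groups : seq (seq nat) := [seq [:: i; i + 9] | i <- iota 0 9].

Definition S20 : {set 'I_20} := natset 20 [:: 18; 19].
Definition Gs20 : {set {set 'I_20}} := natsets 20 groups.
Definition A20 : {set {set 'I_20}} := natsets 20 blocks.

Lemma S20C : ~: S20 = natset 20 (iota 0 18).
Proof. by rewrite -setTD natsetT natsetD; congr natset. Qed.

Lemma partition_Gs20 : partition Gs20 (natset 20 (iota 0 18)).
Proof.
rewrite (@eq_natset _ _ (flatten groups)); last exact/perm_mem.
exact: partition_natsets.
Qed.

Lemma card_Gs20 : #|Gs20| = 9.
Proof. exact: card_natsets. Qed.

Lemma card_group : {in Gs20, forall G : {set 'I_20}, #|G| = 2}.
Proof.
have groups_ok : all (fun g => wf_natseq 20 g && (size g == 2)) groups by vm_compute.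
move=> G; rewrite inE => /mapP[g g_groups ->].
by have /andP[wf_g /eqP size_g] := allP groups_ok g g_groups; rewrite card_wf_natset.
Qed.

Lemma wf_blocks20 : wf_blocks 20 blocks.
Proof. by vm_compute. Qed.

Lemma blocks_cqs : is_cqs 20 [:: 18; 19] groups blocks.
Proof. by vm_compute. Qed.

Lemma CQS_A20 : CQS 2 9 2 S20 Gs20 A20.
Proof.
have wf_S : wf_natseq 20 [:: 18; 19] by [].
have part : partition Gs20 (~: S20) by rewrite S20C partition_Gs20.
exact: CQS_natsets wf_S part card_Gs20 card_group wf_blocks20 blocks_cqs.
Qed.

(* Entry [x] colors the blocks of the derived design at [x]. *)
Definition derived_colorings : seq (seq (seq (seq nat))) := [::
  [:: [:: [:: 7; 16; 17]; [:: 2; 11; 13]; [:: 3; 5; 8]; [:: 4; 14; 15]];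
      [:: [:: 2; 15; 17]; [:: 4; 11; 16]; [:: 5; 13; 14]; [:: 7; 10; 12]; [:: 1; 6; 8]];
      [:: [:: 8; 13; 18]; [:: 10; 11; 19]; [:: 2; 5; 6]; [:: 1; 15; 16]; [:: 4; 9; 12]; [:: 3; 14; 17]];
      [:: [:: 12; 15; 18]; [:: 5; 16; 19]; [:: 2; 7; 8]; [:: 6; 11; 14]; [:: 3; 9; 13]; [:: 1; 10; 17]];
      [:: [:: 4; 17; 18]; [:: 6; 12; 19]; [:: 1; 3; 7]; [:: 2; 9; 16]; [:: 5; 11; 15]; [:: 8; 10; 14]];
      [:: [:: 3; 6; 18]; [:: 1; 2; 19]; [:: 7; 9; 11]; [:: 5; 12; 17]; [:: 4; 10; 13]];
      [:: [:: 5; 7; 18]; [:: 13; 17; 19]; [:: 8; 12; 16]; [:: 2; 3; 4]; [:: 1; 9; 14]; [:: 6; 10; 15]];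
      [:: [:: 2; 10; 18]; [:: 7; 14; 19]; [:: 1; 4; 5]; [:: 8; 9; 15]; [:: 6; 13; 16]; [:: 3; 11; 12]];
      [:: [:: 14; 16; 18]; [:: 3; 15; 19]; [:: 8; 11; 17]; [:: 1; 12; 13]; [:: 5; 9; 10]; [:: 4; 6; 7]];
      [:: [:: 1; 11; 18]; [:: 4; 8; 19]; [:: 2; 12; 14]; [:: 3; 10; 16]; [:: 7; 13; 15]; [:: 6; 9; 17]]];
  [:: [:: [:: 8; 15; 17]; [:: 0; 9; 14]; [:: 3; 4; 6]; [:: 5; 12; 16]];
      [:: [:: 0; 15; 16]; [:: 5; 9; 17]; [:: 3; 12; 14]; [:: 8; 11; 13]; [:: 2; 6; 7]];
      [:: [:: 6; 14; 18]; [:: 9; 11; 19]; [:: 0; 3; 7]; [:: 2; 16; 17]; [:: 5; 10; 13]; [:: 4; 12; 15]];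
      [:: [:: 13; 16; 18]; [:: 3; 17; 19]; [:: 0; 6; 8]; [:: 7; 9; 12]; [:: 4; 10; 14]; [:: 2; 11; 15]];
      [:: [:: 5; 15; 18]; [:: 7; 13; 19]; [:: 2; 4; 8]; [:: 0; 10; 17]; [:: 3; 9; 16]; [:: 6; 11; 12]];
      [:: [:: 4; 7; 18]; [:: 0; 2; 19]; [:: 8; 9; 10]; [:: 3; 13; 15]; [:: 5; 11; 14]];
      [:: [:: 3; 8; 18]; [:: 14; 15; 19]; [:: 6; 13; 17]; [:: 0; 4; 5]; [:: 2; 10; 12]; [:: 7; 11; 16]];
      [:: [:: 0; 11; 18]; [:: 8; 12; 19]; [:: 2; 3; 5]; [:: 6; 10; 16]; [:: 7; 14; 17]; [:: 4; 9; 13]];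
      [:: [:: 12; 17; 18]; [:: 4; 16; 19]; [:: 6; 9; 15]; [:: 2; 13; 14]; [:: 3; 10; 11]; [:: 5; 7; 8]];
      [:: [:: 2; 9; 18]; [:: 5; 6; 19]; [:: 0; 12; 13]; [:: 4; 11; 17]; [:: 8; 14; 16]; [:: 7; 10; 15]]];
  [:: [:: [:: 6; 15; 16]; [:: 1; 10; 12]; [:: 4; 5; 7]; [:: 3; 13; 17]];
      [:: [:: 1; 16; 17]; [:: 3; 10; 15]; [:: 4; 12; 13]; [:: 6; 9; 14]; [:: 0; 7; 8]];
      [:: [:: 7; 12; 18]; [:: 9; 10; 19]; [:: 1; 4; 8]; [:: 0; 15; 17]; [:: 3; 11; 14]; [:: 5; 13; 16]];
      [:: [:: 14; 17; 18]; [:: 4; 15; 19]; [:: 1; 6; 7]; [:: 8; 10; 13]; [:: 5; 11; 12]; [:: 0; 9; 16]];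
      [:: [:: 3; 16; 18]; [:: 8; 14; 19]; [:: 0; 5; 6]; [:: 1; 11; 15]; [:: 4; 10; 17]; [:: 7; 9; 13]];
      [:: [:: 5; 8; 18]; [:: 0; 1; 19]; [:: 6; 10; 11]; [:: 4; 14; 16]; [:: 3; 9; 12]];
      [:: [:: 4; 6; 18]; [:: 12; 16; 19]; [:: 7; 14; 15]; [:: 1; 3; 5]; [:: 0; 11; 13]; [:: 8; 9; 17]];
      [:: [:: 1; 9; 18]; [:: 6; 13; 19]; [:: 0; 3; 4]; [:: 7; 11; 17]; [:: 8; 12; 15]; [:: 5; 10; 14]];
      [:: [:: 13; 15; 18]; [:: 5; 17; 19]; [:: 7; 10; 16]; [:: 0; 12; 14]; [:: 4; 9; 11]; [:: 3; 6; 8]];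
      [:: [:: 0; 10; 18]; [:: 3; 7; 19]; [:: 1; 13; 14]; [:: 5; 9; 15]; [:: 6; 12; 17]; [:: 8; 11; 16]]];
  [:: [:: [:: 1; 10; 11]; [:: 5; 14; 16]; [:: 2; 6; 8]; [:: 7; 9; 17]];
      [:: [:: 5; 9; 11]; [:: 7; 10; 14]; [:: 8; 16; 17]; [:: 1; 13; 15]; [:: 0; 2; 4]];
      [:: [:: 2; 16; 18]; [:: 13; 14; 19]; [:: 0; 5; 8]; [:: 4; 9; 10]; [:: 7; 12; 15]; [:: 6; 11; 17]];
      [:: [:: 9; 15; 18]; [:: 8; 10; 19]; [:: 1; 2; 5]; [:: 0; 14; 17]; [:: 6; 12; 16]; [:: 4; 11; 13]];
      [:: [:: 7; 11; 18]; [:: 0; 15; 19]; [:: 1; 4; 6]; [:: 5; 10; 12]; [:: 8; 9; 14]; [:: 2; 13; 17]];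
      [:: [:: 0; 6; 18]; [:: 4; 5; 19]; [:: 1; 12; 14]; [:: 8; 11; 15]; [:: 7; 13; 16]];
      [:: [:: 1; 8; 18]; [:: 11; 16; 19]; [:: 2; 10; 15]; [:: 5; 6; 7]; [:: 4; 12; 17]; [:: 0; 9; 13]];
      [:: [:: 5; 13; 18]; [:: 1; 17; 19]; [:: 4; 7; 8]; [:: 2; 9; 12]; [:: 0; 10; 16]; [:: 6; 14; 15]];
      [:: [:: 10; 17; 18]; [:: 6; 9; 19]; [:: 2; 11; 14]; [:: 4; 15; 16]; [:: 8; 12; 13]; [:: 0; 1; 7]];
      [:: [:: 4; 14; 18]; [:: 2; 7; 19]; [:: 5; 15; 17]; [:: 6; 10; 13]; [:: 1; 9; 16]; [:: 0; 11; 12]]];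
  [:: [:: [:: 2; 9; 11]; [:: 3; 12; 17]; [:: 0; 6; 7]; [:: 8; 10; 15]];
      [:: [:: 3; 9; 10]; [:: 8; 11; 12]; [:: 6; 15; 17]; [:: 2; 14; 16]; [:: 0; 1; 5]];
      [:: [:: 0; 17; 18]; [:: 12; 14; 19]; [:: 1; 3; 6]; [:: 5; 10; 11]; [:: 8; 13; 16]; [:: 7; 9; 15]];
      [:: [:: 10; 16; 18]; [:: 6; 11; 19]; [:: 0; 2; 3]; [:: 1; 12; 15]; [:: 7; 13; 17]; [:: 5; 9; 14]];
      [:: [:: 8; 9; 18]; [:: 1; 16; 19]; [:: 2; 5; 7]; [:: 3; 11; 13]; [:: 6; 10; 12]; [:: 0; 14; 15]];
      [:: [:: 1; 7; 18]; [:: 3; 5; 19]; [:: 2; 12; 13]; [:: 6; 9; 16]; [:: 8; 14; 17]];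
      [:: [:: 2; 6; 18]; [:: 9; 17; 19]; [:: 0; 11; 16]; [:: 3; 7; 8]; [:: 5; 13; 15]; [:: 1; 10; 14]];
      [:: [:: 3; 14; 18]; [:: 2; 15; 19]; [:: 5; 6; 8]; [:: 0; 10; 13]; [:: 1; 11; 17]; [:: 7; 12; 16]];
      [:: [:: 11; 15; 18]; [:: 7; 10; 19]; [:: 0; 9; 12]; [:: 5; 16; 17]; [:: 6; 13; 14]; [:: 1; 2; 8]];
      [:: [:: 5; 12; 18]; [:: 0; 8; 19]; [:: 3; 15; 16]; [:: 7; 11; 14]; [:: 2; 10; 17]; [:: 1; 9; 13]]];
  [:: [:: [:: 0; 9; 10]; [:: 4; 13; 15]; [:: 1; 7; 8]; [:: 6; 11; 16]];
      [:: [:: 4; 10; 11]; [:: 6; 9; 13]; [:: 7; 15; 16]; [:: 0; 12; 17]; [:: 1; 2; 3]];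
      [:: [:: 1; 15; 18]; [:: 12; 13; 19]; [:: 2; 4; 7]; [:: 3; 9; 11]; [:: 6; 14; 17]; [:: 8; 10; 16]];
      [:: [:: 11; 17; 18]; [:: 7; 9; 19]; [:: 0; 1; 4]; [:: 2; 13; 16]; [:: 8; 14; 15]; [:: 3; 10; 12]];
      [:: [:: 6; 10; 18]; [:: 2; 17; 19]; [:: 0; 3; 8]; [:: 4; 9; 14]; [:: 7; 11; 13]; [:: 1; 12; 16]];
      [:: [:: 2; 8; 18]; [:: 3; 4; 19]; [:: 0; 13; 14]; [:: 7; 10; 17]; [:: 6; 12; 15]];
      [:: [:: 0; 7; 18]; [:: 10; 15; 19]; [:: 1; 9; 17]; [:: 4; 6; 8]; [:: 3; 14; 16]; [:: 2; 11; 12]];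
      [:: [:: 4; 12; 18]; [:: 0; 16; 19]; [:: 3; 6; 7]; [:: 1; 11; 14]; [:: 2; 9; 15]; [:: 8; 13; 17]];
      [:: [:: 9; 16; 18]; [:: 8; 11; 19]; [:: 1; 10; 13]; [:: 3; 15; 17]; [:: 7; 12; 14]; [:: 0; 2; 6]];
      [:: [:: 3; 13; 18]; [:: 1; 6; 19]; [:: 4; 16; 17]; [:: 8; 9; 12]; [:: 0; 11; 15]; [:: 2; 10; 14]]];
  [:: [:: [:: 4; 13; 14]; [:: 8; 10; 17]; [:: 0; 2; 5]; [:: 1; 11; 12]];
      [:: [:: 8; 12; 14]; [:: 1; 13; 17]; [:: 2; 10; 11]; [:: 4; 9; 16]; [:: 3; 5; 7]];
      [:: [:: 5; 10; 18]; [:: 16; 17; 19]; [:: 2; 3; 8]; [:: 7; 12; 13]; [:: 1; 9; 15]; [:: 0; 11; 14]];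
      [:: [:: 9; 12; 18]; [:: 2; 13; 19]; [:: 4; 5; 8]; [:: 3; 11; 17]; [:: 0; 10; 15]; [:: 7; 14; 16]];
      [:: [:: 1; 14; 18]; [:: 3; 9; 19]; [:: 0; 4; 7]; [:: 8; 13; 15]; [:: 2; 12; 17]; [:: 5; 11; 16]];
      [:: [:: 0; 3; 18]; [:: 7; 8; 19]; [:: 4; 15; 17]; [:: 2; 9; 14]; [:: 1; 10; 16]];
      [:: [:: 2; 4; 18]; [:: 10; 14; 19]; [:: 5; 9; 13]; [:: 0; 1; 8]; [:: 7; 11; 15]; [:: 3; 12; 16]];
      [:: [:: 8; 16; 18]; [:: 4; 11; 19]; [:: 1; 2; 7]; [:: 5; 12; 15]; [:: 3; 10; 13]; [:: 0; 9; 17]];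
      [:: [:: 11; 13; 18]; [:: 0; 12; 19]; [:: 5; 14; 17]; [:: 7; 9; 10]; [:: 2; 15; 16]; [:: 1; 3; 4]];
      [:: [:: 7; 17; 18]; [:: 1; 5; 19]; [:: 8; 9; 11]; [:: 0; 13; 16]; [:: 4; 10; 12]; [:: 3; 14; 15]]];
  [:: [:: [:: 5; 12; 14]; [:: 6; 11; 15]; [:: 0; 1; 3]; [:: 2; 9; 13]];
      [:: [:: 6; 12; 13]; [:: 2; 14; 15]; [:: 0; 9; 11]; [:: 5; 10; 17]; [:: 3; 4; 8]];
      [:: [:: 3; 11; 18]; [:: 15; 17; 19]; [:: 0; 4; 6]; [:: 8; 13; 14]; [:: 2; 10; 16]; [:: 1; 9; 12]];
      [:: [:: 10; 13; 18]; [:: 0; 14; 19]; [:: 3; 5; 6]; [:: 4; 9; 15]; [:: 1; 11; 16]; [:: 8; 12; 17]];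
      [:: [:: 2; 12; 18]; [:: 4; 10; 19]; [:: 1; 5; 8]; [:: 6; 14; 16]; [:: 0; 13; 15]; [:: 3; 9; 17]];
      [:: [:: 1; 4; 18]; [:: 6; 8; 19]; [:: 5; 15; 16]; [:: 0; 10; 12]; [:: 2; 11; 17]];
      [:: [:: 0; 5; 18]; [:: 11; 12; 19]; [:: 3; 10; 14]; [:: 1; 2; 6]; [:: 8; 9; 16]; [:: 4; 13; 17]];
      [:: [:: 6; 17; 18]; [:: 5; 9; 19]; [:: 0; 2; 8]; [:: 3; 13; 16]; [:: 4; 11; 14]; [:: 1; 10; 15]];
      [:: [:: 9; 14; 18]; [:: 1; 13; 19]; [:: 3; 12; 15]; [:: 8; 10; 11]; [:: 0; 16; 17]; [:: 2; 4; 5]];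
      [:: [:: 8; 15; 18]; [:: 2; 3; 19]; [:: 6; 9; 10]; [:: 1; 14; 17]; [:: 5; 11; 13]; [:: 4; 12; 16]]];
  [:: [:: [:: 3; 12; 13]; [:: 7; 9; 16]; [:: 1; 2; 4]; [:: 0; 10; 14]];
      [:: [:: 7; 13; 14]; [:: 0; 12; 16]; [:: 1; 9; 10]; [:: 3; 11; 15]; [:: 4; 5; 6]];
      [:: [:: 4; 9; 18]; [:: 15; 16; 19]; [:: 1; 5; 7]; [:: 6; 12; 14]; [:: 0; 11; 17]; [:: 2; 10; 13]];
      [:: [:: 11; 14; 18]; [:: 1; 12; 19]; [:: 3; 4; 7]; [:: 5; 10; 16]; [:: 2; 9; 17]; [:: 6; 13; 15]];
      [:: [:: 0; 13; 18]; [:: 5; 11; 19]; [:: 2; 3; 6]; [:: 7; 12; 17]; [:: 1; 14; 16]; [:: 4; 10; 15]];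
      [:: [:: 2; 5; 18]; [:: 6; 7; 19]; [:: 3; 16; 17]; [:: 1; 11; 13]; [:: 0; 9; 15]];
      [:: [:: 1; 3; 18]; [:: 9; 13; 19]; [:: 4; 11; 12]; [:: 0; 2; 7]; [:: 6; 10; 17]; [:: 5; 14; 15]];
      [:: [:: 7; 15; 18]; [:: 3; 10; 19]; [:: 0; 1; 6]; [:: 4; 14; 17]; [:: 5; 9; 12]; [:: 2; 11; 16]];
      [:: [:: 10; 12; 18]; [:: 2; 14; 19]; [:: 4; 13; 16]; [:: 6; 9; 11]; [:: 1; 15; 17]; [:: 0; 3; 5]];
      [:: [:: 6; 16; 18]; [:: 0; 4; 19]; [:: 7; 10; 11]; [:: 2; 12; 15]; [:: 3; 9; 14]; [:: 5; 13; 17]]];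
  [:: [:: [:: 7; 8; 16]; [:: 2; 4; 11]; [:: 12; 14; 17]; [:: 5; 6; 13]];
      [:: [:: 6; 8; 11]; [:: 2; 7; 13]; [:: 4; 5; 14]; [:: 1; 3; 16]; [:: 10; 15; 17]];
      [:: [:: 4; 17; 19]; [:: 1; 2; 18]; [:: 11; 14; 15]; [:: 6; 7; 10]; [:: 0; 3; 13]; [:: 5; 8; 12]];
      [:: [:: 3; 6; 19]; [:: 7; 14; 18]; [:: 11; 16; 17]; [:: 2; 5; 15]; [:: 0; 4; 12]; [:: 1; 8; 10]];
      [:: [:: 8; 13; 19]; [:: 3; 15; 18]; [:: 10; 12; 16]; [:: 0; 7; 11]; [:: 2; 6; 14]; [:: 1; 5; 17]];
      [:: [:: 12; 15; 19]; [:: 10; 11; 18]; [:: 0; 2; 16]; [:: 3; 8; 14]; [:: 1; 4; 13]];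
      [:: [:: 14; 16; 19]; [:: 4; 8; 18]; [:: 3; 7; 17]; [:: 11; 12; 13]; [:: 0; 5; 10]; [:: 1; 6; 15]];
      [:: [:: 1; 11; 19]; [:: 5; 16; 18]; [:: 10; 13; 14]; [:: 0; 6; 17]; [:: 4; 7; 15]; [:: 2; 3; 12]];
      [:: [:: 5; 7; 19]; [:: 6; 12; 18]; [:: 2; 8; 17]; [:: 3; 4; 10]; [:: 0; 1; 14]; [:: 13; 15; 16]];
      [:: [:: 2; 10; 19]; [:: 13; 17; 18]; [:: 3; 5; 11]; [:: 1; 7; 12]; [:: 4; 6; 16]; [:: 0; 8; 15]]];
  [:: [:: [:: 6; 8; 17]; [:: 0; 5; 9]; [:: 12; 13; 15]; [:: 3; 7; 14]];
      [:: [:: 6; 7; 9]; [:: 0; 8; 14]; [:: 3; 5; 12]; [:: 2; 4; 17]; [:: 11; 15; 16]];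
      [:: [:: 5; 15; 19]; [:: 0; 2; 18]; [:: 9; 12; 16]; [:: 7; 8; 11]; [:: 1; 4; 14]; [:: 3; 6; 13]];
      [:: [:: 4; 7; 19]; [:: 8; 12; 18]; [:: 9; 15; 17]; [:: 0; 3; 16]; [:: 1; 5; 13]; [:: 2; 6; 11]];
      [:: [:: 6; 14; 19]; [:: 4; 16; 18]; [:: 11; 13; 17]; [:: 1; 8; 9]; [:: 0; 7; 12]; [:: 2; 3; 15]];
      [:: [:: 13; 16; 19]; [:: 9; 11; 18]; [:: 0; 1; 17]; [:: 4; 6; 12]; [:: 2; 5; 14]];
      [:: [:: 12; 17; 19]; [:: 5; 6; 18]; [:: 4; 8; 15]; [:: 9; 13; 14]; [:: 1; 3; 11]; [:: 2; 7; 16]];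
      [:: [:: 2; 9; 19]; [:: 3; 17; 18]; [:: 11; 12; 14]; [:: 1; 7; 15]; [:: 5; 8; 16]; [:: 0; 4; 13]];
      [:: [:: 3; 8; 19]; [:: 7; 13; 18]; [:: 0; 6; 15]; [:: 4; 5; 11]; [:: 1; 2; 12]; [:: 14; 16; 17]];
      [:: [:: 0; 11; 19]; [:: 14; 15; 18]; [:: 3; 4; 9]; [:: 2; 8; 13]; [:: 5; 7; 17]; [:: 1; 6; 16]]];
  [:: [:: [:: 6; 7; 15]; [:: 1; 3; 10]; [:: 13; 14; 16]; [:: 4; 8; 12]];
      [:: [:: 7; 8; 10]; [:: 1; 6; 12]; [:: 3; 4; 13]; [:: 0; 5; 15]; [:: 9; 16; 17]];
      [:: [:: 3; 16; 19]; [:: 0; 1; 18]; [:: 10; 13; 17]; [:: 6; 8; 9]; [:: 2; 5; 12]; [:: 4; 7; 14]];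
      [:: [:: 5; 8; 19]; [:: 6; 13; 18]; [:: 10; 15; 16]; [:: 1; 4; 17]; [:: 2; 3; 14]; [:: 0; 7; 9]];
      [:: [:: 7; 12; 19]; [:: 5; 17; 18]; [:: 9; 14; 15]; [:: 2; 6; 10]; [:: 1; 8; 13]; [:: 0; 4; 16]];
      [:: [:: 14; 17; 19]; [:: 9; 10; 18]; [:: 1; 2; 15]; [:: 5; 7; 13]; [:: 0; 3; 12]];
      [:: [:: 13; 15; 19]; [:: 3; 7; 18]; [:: 5; 6; 16]; [:: 10; 12; 14]; [:: 2; 4; 9]; [:: 0; 8; 17]];
      [:: [:: 0; 10; 19]; [:: 4; 15; 18]; [:: 9; 12; 13]; [:: 2; 8; 16]; [:: 3; 6; 17]; [:: 1; 5; 14]];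
      [:: [:: 4; 6; 19]; [:: 8; 14; 18]; [:: 1; 7; 16]; [:: 3; 5; 9]; [:: 0; 2; 13]; [:: 12; 15; 17]];
      [:: [:: 1; 9; 19]; [:: 12; 16; 18]; [:: 4; 5; 10]; [:: 0; 6; 14]; [:: 3; 8; 15]; [:: 2; 7; 17]]];
  [:: [:: [:: 1; 2; 10]; [:: 5; 7; 14]; [:: 11; 15; 17]; [:: 0; 8; 16]];
      [:: [:: 0; 2; 14]; [:: 1; 5; 16]; [:: 7; 8; 17]; [:: 4; 6; 10]; [:: 9; 11; 13]];
      [:: [:: 7; 11; 19]; [:: 4; 5; 18]; [:: 9; 14; 17]; [:: 0; 1; 13]; [:: 3; 6; 16]; [:: 2; 8; 15]];
      [:: [:: 0; 6; 19]; [:: 1; 17; 18]; [:: 10; 11; 14]; [:: 5; 8; 9]; [:: 3; 7; 15]; [:: 2; 4; 13]];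
      [:: [:: 2; 16; 19]; [:: 6; 9; 18]; [:: 10; 13; 15]; [:: 1; 3; 14]; [:: 0; 5; 17]; [:: 4; 8; 11]];
      [:: [:: 9; 15; 19]; [:: 13; 14; 18]; [:: 3; 5; 10]; [:: 2; 6; 17]; [:: 4; 7; 16]];
      [:: [:: 10; 17; 19]; [:: 2; 7; 18]; [:: 1; 6; 11]; [:: 14; 15; 16]; [:: 3; 8; 13]; [:: 0; 4; 9]];
      [:: [:: 4; 14; 19]; [:: 8; 10; 18]; [:: 13; 16; 17]; [:: 0; 3; 11]; [:: 1; 7; 9]; [:: 5; 6; 15]];
      [:: [:: 1; 8; 19]; [:: 0; 15; 18]; [:: 2; 5; 11]; [:: 6; 7; 13]; [:: 3; 4; 17]; [:: 9; 10; 16]];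
      [:: [:: 5; 13; 19]; [:: 11; 16; 18]; [:: 6; 8; 14]; [:: 1; 4; 15]; [:: 0; 7; 10]; [:: 2; 3; 9]]];
  [:: [:: [:: 0; 2; 11]; [:: 3; 8; 12]; [:: 9; 15; 16]; [:: 1; 6; 17]];
      [:: [:: 0; 1; 12]; [:: 2; 3; 17]; [:: 6; 8; 15]; [:: 5; 7; 11]; [:: 9; 10; 14]];
      [:: [:: 8; 9; 19]; [:: 3; 5; 18]; [:: 10; 12; 15]; [:: 1; 2; 14]; [:: 4; 7; 17]; [:: 0; 6; 16]];
      [:: [:: 1; 7; 19]; [:: 2; 15; 18]; [:: 9; 11; 12]; [:: 3; 6; 10]; [:: 4; 8; 16]; [:: 0; 5; 14]];
      [:: [:: 0; 17; 19]; [:: 7; 10; 18]; [:: 11; 14; 16]; [:: 2; 4; 12]; [:: 1; 3; 15]; [:: 5; 6; 9]];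
      [:: [:: 10; 16; 19]; [:: 12; 14; 18]; [:: 3; 4; 11]; [:: 0; 7; 15]; [:: 5; 8; 17]];
      [:: [:: 11; 15; 19]; [:: 0; 8; 18]; [:: 2; 7; 9]; [:: 12; 16; 17]; [:: 4; 6; 14]; [:: 1; 5; 10]];
      [:: [:: 5; 12; 19]; [:: 6; 11; 18]; [:: 14; 15; 17]; [:: 1; 4; 9]; [:: 2; 8; 10]; [:: 3; 7; 16]];
      [:: [:: 2; 6; 19]; [:: 1; 16; 18]; [:: 0; 3; 9]; [:: 7; 8; 14]; [:: 4; 5; 15]; [:: 10; 11; 17]];
      [:: [:: 3; 14; 19]; [:: 9; 17; 18]; [:: 6; 7; 12]; [:: 2; 5; 16]; [:: 1; 8; 11]; [:: 0; 4; 10]]];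
  [:: [:: [:: 0; 1; 9]; [:: 4; 6; 13]; [:: 10; 16; 17]; [:: 2; 7; 15]];
      [:: [:: 1; 2; 13]; [:: 0; 4; 15]; [:: 6; 7; 16]; [:: 3; 8; 9]; [:: 10; 11; 12]];
      [:: [:: 6; 10; 19]; [:: 3; 4; 18]; [:: 11; 13; 16]; [:: 0; 2; 12]; [:: 5; 8; 15]; [:: 1; 7; 17]];
      [:: [:: 2; 8; 19]; [:: 0; 16; 18]; [:: 9; 10; 13]; [:: 4; 7; 11]; [:: 5; 6; 17]; [:: 1; 3; 12]];
      [:: [:: 1; 15; 19]; [:: 8; 11; 18]; [:: 9; 12; 17]; [:: 0; 5; 13]; [:: 2; 4; 16]; [:: 3; 7; 10]];
      [:: [:: 11; 17; 19]; [:: 12; 13; 18]; [:: 4; 5; 9]; [:: 1; 8; 16]; [:: 3; 6; 15]];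
      [:: [:: 9; 16; 19]; [:: 1; 6; 18]; [:: 0; 8; 10]; [:: 13; 15; 17]; [:: 5; 7; 12]; [:: 2; 3; 11]];
      [:: [:: 3; 13; 19]; [:: 7; 9; 18]; [:: 12; 15; 16]; [:: 2; 5; 10]; [:: 0; 6; 11]; [:: 4; 8; 17]];
      [:: [:: 0; 7; 19]; [:: 2; 17; 18]; [:: 1; 4; 10]; [:: 6; 8; 12]; [:: 3; 5; 16]; [:: 9; 11; 15]];
      [:: [:: 4; 12; 19]; [:: 10; 15; 18]; [:: 7; 8; 13]; [:: 0; 3; 17]; [:: 2; 6; 9]; [:: 1; 5; 11]]];
  [:: [:: [:: 4; 5; 13]; [:: 1; 8; 17]; [:: 9; 11; 14]; [:: 2; 3; 10]];
      [:: [:: 3; 5; 17]; [:: 4; 8; 10]; [:: 1; 2; 11]; [:: 0; 7; 13]; [:: 12; 14; 16]];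
      [:: [:: 1; 14; 19]; [:: 7; 8; 18]; [:: 11; 12; 17]; [:: 3; 4; 16]; [:: 0; 6; 10]; [:: 2; 5; 9]];
      [:: [:: 0; 3; 19]; [:: 4; 11; 18]; [:: 13; 14; 17]; [:: 2; 8; 12]; [:: 1; 6; 9]; [:: 5; 7; 16]];
      [:: [:: 5; 10; 19]; [:: 0; 12; 18]; [:: 9; 13; 16]; [:: 4; 6; 17]; [:: 3; 8; 11]; [:: 2; 7; 14]];
      [:: [:: 9; 12; 19]; [:: 16; 17; 18]; [:: 6; 8; 13]; [:: 0; 5; 11]; [:: 1; 7; 10]];
      [:: [:: 11; 13; 19]; [:: 1; 5; 18]; [:: 0; 4; 14]; [:: 9; 10; 17]; [:: 2; 6; 16]; [:: 3; 7; 12]];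
      [:: [:: 7; 17; 19]; [:: 2; 13; 18]; [:: 10; 11; 16]; [:: 3; 6; 14]; [:: 1; 4; 12]; [:: 0; 8; 9]];
      [:: [:: 2; 4; 19]; [:: 3; 9; 18]; [:: 5; 8; 14]; [:: 0; 1; 16]; [:: 6; 7; 11]; [:: 10; 12; 13]];
      [:: [:: 8; 16; 19]; [:: 10; 14; 18]; [:: 0; 2; 17]; [:: 4; 7; 9]; [:: 1; 3; 13]; [:: 5; 6; 12]]];
  [:: [:: [:: 3; 5; 14]; [:: 2; 6; 15]; [:: 9; 10; 12]; [:: 0; 4; 11]];
      [:: [:: 3; 4; 15]; [:: 5; 6; 11]; [:: 0; 2; 9]; [:: 1; 8; 14]; [:: 12; 13; 17]];
      [:: [:: 2; 12; 19]; [:: 6; 8; 18]; [:: 9; 13; 15]; [:: 4; 5; 17]; [:: 1; 7; 11]; [:: 0; 3; 10]];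
      [:: [:: 1; 4; 19]; [:: 5; 9; 18]; [:: 12; 14; 15]; [:: 0; 6; 13]; [:: 2; 7; 10]; [:: 3; 8; 17]];
      [:: [:: 3; 11; 19]; [:: 1; 13; 18]; [:: 10; 14; 17]; [:: 5; 7; 15]; [:: 4; 6; 9]; [:: 0; 8; 12]];
      [:: [:: 10; 13; 19]; [:: 15; 17; 18]; [:: 6; 7; 14]; [:: 1; 3; 9]; [:: 2; 8; 11]];
      [:: [:: 9; 14; 19]; [:: 2; 3; 18]; [:: 1; 5; 12]; [:: 10; 11; 15]; [:: 0; 7; 17]; [:: 4; 8; 13]];
      [:: [:: 8; 15; 19]; [:: 0; 14; 18]; [:: 9; 11; 17]; [:: 4; 7; 12]; [:: 2; 5; 13]; [:: 1; 6; 10]];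
      [:: [:: 0; 5; 19]; [:: 4; 10; 18]; [:: 3; 6; 12]; [:: 1; 2; 17]; [:: 7; 8; 9]; [:: 11; 13; 14]];
      [:: [:: 6; 17; 19]; [:: 11; 12; 18]; [:: 0; 1; 15]; [:: 5; 8; 10]; [:: 2; 4; 14]; [:: 3; 7; 13]]];
  [:: [:: [:: 3; 4; 12]; [:: 0; 7; 16]; [:: 10; 11; 13]; [:: 1; 5; 9]];
      [:: [:: 4; 5; 16]; [:: 3; 7; 9]; [:: 0; 1; 10]; [:: 2; 6; 12]; [:: 13; 14; 15]];
      [:: [:: 0; 13; 19]; [:: 6; 7; 18]; [:: 10; 14; 16]; [:: 3; 5; 15]; [:: 2; 8; 9]; [:: 1; 4; 11]];
      [:: [:: 2; 5; 19]; [:: 3; 10; 18]; [:: 12; 13; 16]; [:: 1; 7; 14]; [:: 0; 8; 11]; [:: 4; 6; 15]];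
      [:: [:: 4; 9; 19]; [:: 2; 14; 18]; [:: 11; 12; 15]; [:: 3; 8; 16]; [:: 5; 7; 10]; [:: 1; 6; 13]];
      [:: [:: 11; 14; 19]; [:: 15; 16; 18]; [:: 7; 8; 12]; [:: 2; 4; 10]; [:: 0; 6; 9]];
      [:: [:: 10; 12; 19]; [:: 0; 4; 18]; [:: 2; 3; 13]; [:: 9; 11; 16]; [:: 1; 8; 15]; [:: 5; 6; 14]];
      [:: [:: 6; 16; 19]; [:: 1; 12; 18]; [:: 9; 10; 15]; [:: 5; 8; 13]; [:: 0; 3; 14]; [:: 2; 7; 11]];
      [:: [:: 1; 3; 19]; [:: 5; 11; 18]; [:: 4; 7; 13]; [:: 0; 2; 15]; [:: 6; 8; 10]; [:: 9; 12; 14]];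
      [:: [:: 7; 15; 19]; [:: 9; 13; 18]; [:: 1; 2; 16]; [:: 3; 6; 11]; [:: 0; 5; 12]; [:: 4; 8; 14]]]].

Definition derived_points x : seq nat := [seq i <- iota 0 20 | i != x].

Definition derived_hole x g : seq nat := [seq i <- g ++ [:: 18; 19] | i != x].

Definition derived_certificate x g :=
  [&& size (derived_points x) == 19, size (nth [::] derived_colorings x) == 10 &
      is_gc_certificate 20 (derived_points x) (derived_hole x g) (derive x blocks)
        (nth [::] derived_colorings x)].

Lemma derived_certificates : all (fun g => all (derived_certificate^~ g) g) groups.
Proof. by vm_compute. Qed.

Lemma gcSTS_of_certificate x g : derived_certificate x g ->
  gcSTS (natset 20 (derived_points x)) (natset 20 (derived_hole x g))
        (natsets 20 (derive x blocks)).
Proof.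
(* Unfold first: applying [and3P] to the folded certificate makes unification evaluate it. *)
rewrite /derived_certificate => /and3P[/eqP size_Y /eqP size_cls cert].
by apply: gcSTS_natsets cert; rewrite size_Y size_cls; apply: is_chi'_19.
Qed.

Lemma gcSTS_A20 G x : G \in Gs20 -> x \in G ->
  gcSTS ([set: 'I_20] :\ x) ((G :|: S20) :\ x) (derived A20 x).
Proof.
rewrite inE => /mapP[g g_groups ->]; rewrite in_natset => x_g.
(* Pointwise, since unfolding [derived_points] would make the kernel evaluate the lists. *)
have -> : [set: 'I_20] :\ x = natset 20 (derived_points x).
  by apply/setP => i; rewrite !inE mem_filter mem_iota ltn_ord.
have -> : (natset 20 g :|: S20) :\ x = natset 20 (derived_hole x g).
  by apply/setP => i; rewrite /S20 !inE mem_filter mem_cat !inE.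
rewrite derived_natsets; apply: gcSTS_of_certificate.
exact: allP (allP derived_certificates g g_groups) _ x_g.
Qed.

Definition resolution18 : seq (seq (seq nat)) :=
  [:: [:: [:: 0; 1; 11]; [:: 2; 4; 6]; [:: 3; 5; 13]; [:: 7; 9; 14]; [:: 8; 10; 12]; [:: 15; 16; 17]];
      [:: [:: 0; 2; 10]; [:: 1; 3; 8]; [:: 4; 11; 15]; [:: 5; 9; 16]; [:: 6; 7; 17]; [:: 12; 13; 14]];
      [:: [:: 0; 3; 6]; [:: 1; 4; 7]; [:: 2; 5; 8]; [:: 9; 13; 17]; [:: 10; 14; 15]; [:: 11; 12; 16]];
      [:: [:: 0; 4; 17]; [:: 1; 5; 15]; [:: 2; 3; 16]; [:: 6; 9; 12]; [:: 7; 10; 13]; [:: 8; 11; 14]];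
      [:: [:: 0; 5; 7]; [:: 1; 12; 17]; [:: 2; 13; 15]; [:: 3; 4; 14]; [:: 6; 8; 16]; [:: 9; 10; 11]];
      [:: [:: 0; 8; 13]; [:: 1; 6; 14]; [:: 2; 7; 12]; [:: 3; 9; 15]; [:: 4; 10; 16]; [:: 5; 11; 17]];
      [:: [:: 0; 12; 15]; [:: 1; 13; 16]; [:: 2; 14; 17]; [:: 3; 7; 11]; [:: 4; 8; 9]; [:: 5; 6; 10]];
      [:: [:: 0; 14; 16]; [:: 1; 2; 9]; [:: 3; 10; 17]; [:: 4; 5; 12]; [:: 6; 11; 13]; [:: 7; 8; 15]]].

Definition resolution19 : seq (seq (seq nat)) :=
  [:: [:: [:: 2; 9; 10]; [:: 11; 13; 15]; [:: 4; 12; 14]; [:: 0; 5; 16]; [:: 1; 3; 17]; [:: 6; 7; 8]];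
      [:: [:: 1; 9; 11]; [:: 10; 12; 17]; [:: 2; 6; 13]; [:: 0; 7; 14]; [:: 8; 15; 16]; [:: 3; 4; 5]];
      [:: [:: 9; 12; 15]; [:: 10; 13; 16]; [:: 11; 14; 17]; [:: 0; 4; 8]; [:: 1; 5; 6]; [:: 2; 3; 7]];
      [:: [:: 8; 9; 13]; [:: 6; 10; 14]; [:: 7; 11; 12]; [:: 0; 3; 15]; [:: 1; 4; 16]; [:: 2; 5; 17]];
      [:: [:: 9; 14; 16]; [:: 3; 8; 10]; [:: 4; 6; 11]; [:: 5; 12; 13]; [:: 7; 15; 17]; [:: 0; 1; 2]];
      [:: [:: 4; 9; 17]; [:: 5; 10; 15]; [:: 3; 11; 16]; [:: 0; 6; 12]; [:: 1; 7; 13]; [:: 2; 8; 14]];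
      [:: [:: 3; 6; 9]; [:: 4; 7; 10]; [:: 5; 8; 11]; [:: 2; 12; 16]; [:: 0; 13; 17]; [:: 1; 14; 15]];
      [:: [:: 5; 7; 9]; [:: 0; 10; 11]; [:: 1; 8; 12]; [:: 3; 13; 14]; [:: 2; 4; 15]; [:: 6; 16; 17]]].

Definition resolution_certificate x res :=
  [&& wf_blocks 20 (derive x blocks), is_gdd (iota 0 18) groups (derive x blocks) &
      is_resolution (iota 0 18) (derive x blocks) res].

Lemma resolution18_certificate : resolution_certificate 18 resolution18.
Proof. by vm_compute. Qed.

Lemma resolution19_certificate : resolution_certificate 19 resolution19.
Proof. by vm_compute. Qed.

Lemma RGDD_of_certificate x res : resolution_certificate x res ->
  RGDD (natset 20 (iota 0 18)) Gs20 (natsets 20 (derive x blocks)) 2 9.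
Proof.
rewrite /resolution_certificate => /and3P[wf_bs gdd res_ok].
apply: (RGDD_natsets _ wf_bs res_ok).
exact: GDD_natsets partition_Gs20 card_Gs20 card_group wf_bs gdd.
Qed.

Lemma RGDD_A20 x : x \in S20 -> RGDD (~: S20) Gs20 (derived A20 x) 2 9.
Proof.
rewrite S20C in_natset derived_natsets !inE; case/orP=> /eqP ->; apply: RGDD_of_certificate.
  exact: resolution18_certificate.
exact: resolution19_certificate.
Qed.

Theorem lemma3p6 :
  exists (S : {set 'I_20}) (Gs : {set {set 'I_20}}) (A : {set {set 'I_20}}),
    cDCQS2 2 9 S Gs A.
Proof.
exists S20, Gs20, A20; split; first exact: CQS_A20.
by split; [exact: gcSTS_A20 | exact: RGDD_A20].
Qed.
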